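(* Let $x^*=0\in\Sigma$ be a regular grazing point of order $4$ of an impacting hybrid system $(X,R)$ in local form, and let $\Gamma$ be the orbit of $X$ through $x^*$. Let $\Pi_3=\{x\in\mathbb{R}^n:\ \mathcal{L}_X^3H(x)=0\}$. Then (1) $\Pi_3$ is transverse at $x^*$ to the $(n-1)$-dimensional discontinuity manifold $\Sigma$, and (2) $\Pi_3$ is transverse at $x^*$ to the orbit $\Gamma$.
   Context: Lie derivatives: $\mathcal{L}_XG(x)=\nabla G(x)\cdot X(x)$ and $\mathcal{L}_X^kH=\mathcal{L}_X(\mathcal{L}_X^{k-1}H)$. An impacting hybrid system $(X,R)$ in local form consists of: $\Sigma=\{x:H(x)=0\}$ with $0$ a regular value of the smooth function $H$, $S^+=\{x:H(x)>0\}$, the ODE $x'=X(x)$ for $x\in S^+$ with $X$ a $\mathcal{C}^3$ vector field on $\mathbb{R}^n$, and a reset map $R:\Sigma\to\Sigma$, $R(x)=x+W(x)\mathcal{L}_XH(x)$ with $W:\mathbb{R}^n\to\mathbb{R}^n$ smooth. A point $x^*\in\Sigma$ is a regular grazing point of order $4$ if $\mathcal{L}_XH(x^* )=\mathcal{L}_X^2H(x^* )=\mathcal{L}_X^3H(x^* )=0$ and $\mathcal{L}_X^4H(x^* )\neq0$. *)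

From HB Require Import structures.
From mathcomp Require Import all_boot all_order all_algebra.
From mathcomp Require Import all_classical all_reals all_analysis.
Set Implicit Arguments. Unset Strict Implicit. Unset Printing Implicit Defensive.
Import Order.TTheory GRing.Theory Num.Theory.
Import numFieldNormedType.Exports.
Local Open Scope ring_scope.

(* Class C^k on a finite-dimensional normed space: C^0 = continuous,
   C^(k+1) = differentiable everywhere and every directional derivative
   x |-> Df(x)v is C^k (equivalent to the usual C^(k+1) in finite dimension). *)
Fixpoint Ck {R : realType} {V W : normedModType R} (k : nat) (f : V -> W) : Prop :=
  match k with
  | 0 => continuous f
  | k'.+1 => (forall x, differentiable f x) /\ forall v : V, Ck k' (fun x => derive f x v)
  end.

Definition smooth {R : realType} {V W : normedModType R} (f : V -> W) : Prop :=
  forall k, Ck k f.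

Definition LieD {R : realType} {n : nat} (X : 'rV[R]_n -> 'rV[R]_n)
  (G : 'rV[R]_n -> R) : 'rV[R]_n -> R :=
  fun x => derive G x (X x).

Definition LieDn {R : realType} {n : nat} (X : 'rV[R]_n -> 'rV[R]_n) (k : nat)
  (G : 'rV[R]_n -> R) : 'rV[R]_n -> R := iter k (LieD X) G.

Definition regular_value {R : realType} {n : nat} (H : 'rV[R]_n -> R) (c : R) : Prop :=
  forall x, H x = c -> forall y : R, exists v, 'd H x v = y.

Definition reset_map {R : realType} {n : nat} (X W : 'rV[R]_n -> 'rV[R]_n)
  (H : 'rV[R]_n -> R) (x : 'rV[R]_n) : 'rV[R]_n :=
  x + LieD X H x *: W x.

Definition impacting_hybrid_system {R : realType} {n : nat}
  (H : 'rV[R]_n -> R) (X W : 'rV[R]_n -> 'rV[R]_n) : Prop :=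
  smooth H /\ regular_value H 0 /\ Ck 3 X /\ smooth W /\
  (forall x, H x = 0 -> H (reset_map X W H x) = 0).

Definition regular_grazing_point4 {R : realType} {n : nat}
  (H : 'rV[R]_n -> R) (X : 'rV[R]_n -> 'rV[R]_n) (xs : 'rV[R]_n) : Prop :=
  H xs = 0 /\
  LieDn X 1 H xs = 0 /\ LieDn X 2 H xs = 0 /\ LieDn X 3 H xs = 0 /\
  LieDn X 4 H xs != 0.

Definition transverse_hypersurfaces {R : realType} {n : nat}
  (F G : 'rV[R]_n -> R) (x : 'rV[R]_n) : Prop :=
  F x = 0 /\ G x = 0 /\
  (forall y : R, exists v, 'd F x v = y) /\
  (forall y : R, exists v, 'd G x v = y) /\
  forall w : 'rV[R]_n, exists u v,
    'd F x u = 0 /\ 'd G x v = 0 /\ w = u + v.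

Definition transverse_to_orbit {R : realType} {n : nat}
  (F : 'rV[R]_n -> R) (X : 'rV[R]_n -> 'rV[R]_n) (x : 'rV[R]_n) : Prop :=
  F x = 0 /\
  (forall y : R, exists v, 'd F x v = y) /\
  forall w : 'rV[R]_n, exists u (t : R), 'd F x u = 0 /\ w = u + t *: X x.

From HB Require Import structures.
From mathcomp Require Import all_boot all_order all_algebra.
From mathcomp Require Import all_classical all_reals all_analysis.
Import Order.TTheory GRing.Theory Num.Theory.
Import numFieldNormedType.Exports.
Local Open Scope ring_scope.

(* Put F := L_X^3 H.  The vector X(0) satisfies dF(0) X(0) = L_X^4 H(0) <> 0
   and dH(0) X(0) = L_X H(0) = 0.  Hence dF(0) is onto, and every w splits as
   (w - t X(0)) + t X(0) with t := dF(0) w / dF(0) X(0): the first summand is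
   tangent to Pi_3, the second spans the orbit direction and, lying in
   ker dH(0), is tangent to Sigma.  F is differentiable at 0 because each Lie
   derivative costs one derivative of H and one of X, and X is C^3. *)

Definition mxcoord {R : numFieldType} {m n : nat} (i : 'I_m) (j : 'I_n)
  (M : 'M[R]_(m, n)) : R := M i j.

Lemma mxcoord_is_linear {R : numFieldType} {m n : nat} (i : 'I_m) (j : 'I_n) :
  linear (@mxcoord R m n i j).
Proof. by move=> a M N; rewrite /mxcoord !mxE. Qed.

HB.instance Definition _ {R : numFieldType} {m n : nat} (i : 'I_m) (j : 'I_n) :=
  GRing.isLinear.Build R 'M[R]_(m, n) R _ (@mxcoord R m n i j)
    (mxcoord_is_linear i j).

Section Ck_calculus.
Context {R : realType} {V : normedModType R}.

Lemma Ck_succ {W : normedModType R} k (f : V -> W) : Ck k.+1 f -> Ck k f.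
Proof.
elim: k f => [|k IH] f /= [df Df].
  by move=> x; apply: differentiable_continuous.
by split=> // v; apply/IH/Df.
Qed.

Lemma Ck_le {W : normedModType R} k l (f : V -> W) :
  (k <= l)%N -> Ck l f -> Ck k f.
Proof.
elim: l => [|l IH]; first by rewrite leqn0 => /eqP->.
by rewrite leq_eqVlt ltnS => /predU1P[-> //|/IH kl /Ck_succ].
Qed.

Lemma Ck_cst {W : normedModType R} k (c : W) : Ck k (fun _ : V => c).
Proof.
elim: k c => [|k IH] c /=; first by move=> x; apply: cst_continuous.
split=> [x|v]; first exact: differentiable_cst.
suff -> : (fun x => 'D_v (fun=> c) x) = fun=> 0 by apply: IH.
by apply/funext => x; apply: derive_cst.
Qed.

Lemma Ck_add {W : normedModType R} k (f g : V -> W) :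
  Ck k f -> Ck k g -> Ck k (fun x => f x + g x).
Proof.
elim: k f g => [|k IH] f g /=.
  by move=> cf cg x; exact: continuousD (cf x) (cg x).
move=> [df Df] [dg Dg]; split=> [x|v]; first exact: differentiableD.
suff -> : (fun x => 'D_v (fun y => f y + g y) x) =
          (fun x => 'D_v f x + 'D_v g x) by apply: IH.
by apply/funext => x; rewrite deriveD //; apply: diff_derivable.
Qed.

Lemma Ck_sum {W : normedModType R} k m (F : 'I_m -> V -> W) :
  (forall i, Ck k (F i)) -> Ck k (fun x => \sum_(i < m) F i x).
Proof.
move=> CkF; rewrite -fct_sumE.
by elim/big_ind: _ => //; [apply: Ck_cst | move=> f g; apply: Ck_add].
Qed.

Lemma Ck_mul k (f g : V -> R) : Ck k f -> Ck k g -> Ck k (fun x => f x * g x).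
Proof.
elim: k f g => [|k IH] f g /=.
  by move=> cf cg x; exact: continuousM (cf x) (cg x).
move=> [df Df] [dg Dg]; split=> [x|v]; first exact: differentiableM.
suff -> : (fun x => 'D_v (fun y => f y * g y) x) =
          (fun x => f x * 'D_v g x + g x * 'D_v f x).
  by apply: Ck_add; apply: IH => //; apply: Ck_succ.
by apply/funext => x; rewrite deriveM //; apply: diff_derivable.
Qed.

Lemma Ck_comp_linear {W U : normedModType R} k (L : {linear W -> U})
    (f : V -> W) :
  continuous L -> Ck k f -> Ck k (L \o f).
Proof.
move=> cL; elim: k f => [|k IH] f /=.
  by move=> cf x; exact: continuous_comp (cf x) (cL (f x)).
have dL y : differentiable L y by apply: linear_differentiable.
move=> [df Df]; split=> [x|v]; first exact: differentiable_comp.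
suff -> : (fun x => 'D_v (L \o f) x) = L \o (fun x => 'D_v f x) by apply: IH.
apply/funext => x; rewrite /= !deriveE //; last exact: differentiable_comp.
by rewrite diff_comp // diff_lin.
Qed.

End Ck_calculus.

Section LieDerivative.
Context {R : realType} {n : nat}.
Implicit Types (G : 'rV[R]_n -> R) (X : 'rV[R]_n -> 'rV[R]_n).

Lemma LieDE X G x : differentiable G x -> LieD X G x = 'd G x (X x).
Proof. exact: deriveE. Qed.

Lemma LieD_coordE X G x : differentiable G x ->
  LieD X G x = \sum_(i < n) X x 0 i * 'D_(delta_mx 0 i) G x.
Proof.
move=> dG; rewrite LieDE // {1}[X x]row_sum_delta linear_sum.
by apply: eq_bigr => i _; rewrite linearZ deriveE.
Qed.

Lemma Ck_LieD k X G : Ck k.+1 G -> Ck k X -> Ck k (LieD X G).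
Proof.
move=> [dG DG] CkX.
rewrite (funext (fun x => LieD_coordE X _ _ (dG x))).
apply: Ck_sum => i; apply: Ck_mul; last exact: DG.
exact: Ck_comp_linear k (mxcoord 0 i) X (@coord_continuous R 1 n 0 i) CkX.
Qed.

Lemma Ck_LieDn k m X G :
  Ck (k + m).+1 G -> Ck (k + m) X -> Ck k (LieDn X m.+1 G).
Proof.
elim: m k => [|m IH] k; first by rewrite addn0; apply: Ck_LieD.
rewrite -addSnnS => CkG CkX; apply: Ck_LieD; first exact: IH.
by apply: Ck_le CkX; rewrite addSn leqW // leq_addr.
Qed.

End LieDerivative.

Section LinearFormNonzeroAt.
Context {K : fieldType} {V : lmodType K} {l : {linear V -> K^o}} {a : V}.
Hypothesis la_neq0 : l a != 0.

Lemma linear_form_surjective y : exists v, l v = y.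
Proof. by exists ((y / l a) *: a); rewrite linearZ; apply: divfK. Qed.

Lemma linear_form_ker_line_decomposition w :
  exists u (t : K), l u = 0 /\ w = u + t *: a.
Proof.
exists (w - (l w / l a) *: a), (l w / l a); split; last by rewrite subrK.
by rewrite linearB linearZ; apply/eqP; rewrite subr_eq0 eq_sym; apply/eqP/divfK.
Qed.

End LinearFormNonzeroAt.

Theorem proposition1 (R : realType) (n : nat)
  (H : 'rV[R]_n -> R) (X W : 'rV[R]_n -> 'rV[R]_n) :
  impacting_hybrid_system H X W ->
  regular_grazing_point4 H X 0 ->
  transverse_hypersurfaces (LieDn X 3 H) H 0 /\
  transverse_to_orbit (LieDn X 3 H) X 0.
Proof.
move=> [smH [regH [C3X _]]] [H0 [L1H0 [_ [L3H0 L4H0]]]].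
have dH : differentiable H 0 := (smH 1%N).1 0.
have dL3H : differentiable (LieDn X 3 H) 0 :=
  (Ck_LieDn 1 2 _ _ (smH 4%N) C3X).1 0.
have dH_X : 'd H 0 (X 0) = 0 by rewrite -LieDE.
have dL3H_X : 'd (LieDn X 3 H) 0 (X 0) != 0 by rewrite -LieDE.
split.
- do 2!split=> //; split; first exact: linear_form_surjective dL3H_X.
  split; first exact: regH.
  move=> w; have [u [t [du ->]]] := linear_form_ker_line_decomposition dL3H_X w.
  by exists u, (t *: X 0); rewrite linearZ /= dH_X scaler0.
- split=> //; split; first exact: linear_form_surjective dL3H_X.
  exact: linear_form_ker_line_decomposition dL3H_X.
Qed.
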